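(* Let $\mathcal S$ be a Garside family in a cancellative category $\mathcal C$. The following are equivalent: (i) For all $f,g\in\mathcal C$ that admit a common right-multiple, there exist $\mathcal S$-normal paths $u,v$ such that the negative–positive path $\overline u\,|\,v$ is symmetric $\mathcal S$-normal and $(f,g)\bowtie([u],[v])$; (ii) $\mathcal C$ admits conditional weak left-lcms.
   Context: A category is cancellative if $fg=fg'\Rightarrow g=g'$ and $gf=g'f\Rightarrow g=g'$. $\mathcal C^\times$ is the family of invertible elements; for $\mathcal S\subseteq\mathcal C$, $\mathcal S^\sharp=\mathcal S\mathcal C^\times\cup\mathcal C^\times$. $f\preccurlyeq g$ means $g=fg'$ for some $g'$. A length-two path $(g_1,g_2)$ is $\mathcal S$-greedy if for all $s\in\mathcal S$ and $f\in\mathcal C$ with $fg_1$ defined, $s\preccurlyeq fg_1g_2$ implies $s\preccurlyeq fg_1$; a path is $\mathcal S$-greedy if all its length-two subpaths are. A path is $\mathcal S$-normal if it is $\mathcal S$-greedy and all its entries lie in $\mathcal S^\sharp$. For a path $u=(s_1,\dots,s_p)$, $[u]$ denotes the product $s_1\cdots s_p$ (an identity-element for an empty path). $\mathcal S$ is a Garside family in $\mathcal C$ if every element of $\mathcal C$ is $[u]$ for some $\mathcal S$-normal path $u$. Two elements $f,g$ with the same source are left-disjoint if whenever $h\preccurlyeq h'f$ and $h\preccurlyeq h'g$, then $h\preccurlyeq h'$. For $\mathcal S$-normal paths $u,v$ with the same source, the path $\overline u\,|\,v$ is symmetric $\mathcal S$-normal if, in case $u$ and $v$ are both nonempty, their first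 entries are left-disjoint. For pairs of elements with common source, $(f,g)\bowtie(f',g')$ means there exist $h,h'$ with $hf=h'f'$ and $hg=h'g'$. An element $h$ is a weak left-lcm of $f,g$ (same target) if $h$ is a common left-multiple of $f$ and $g$ and every common left-multiple of $f$ and $g$ that admits a common left-multiple with $h$ is a left-multiple of $h$. $\mathcal C$ admits conditional weak left-lcms if, whenever $f,g$ admit a common left-multiple $h_0$, they admit a weak left-lcm $h$ such that $h_0$ is a left-multiple of $h$. *)

(* small categories presented as a type of elements with
   source/target maps and a composition that is meaningful only on
   composable pairs.  Composition is written left-to-right, as in the
   Garside literature: f g is defined iff tgt f = src g. *)
From Stdlib Require Import List.
Import ListNotations.

Record category := Category {
  Ob : Type;
  El : Type;
  src : El -> Ob;
  tgt : El -> Ob;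
  mul : El -> El -> El;
  one : Ob -> El;
  src_one : forall x, src (one x) = x;
  tgt_one : forall x, tgt (one x) = x;
  src_mul : forall f g, tgt f = src g -> src (mul f g) = src f;
  tgt_mul : forall f g, tgt f = src g -> tgt (mul f g) = tgt g;
  one_mul : forall f, mul (one (src f)) f = f;
  mul_one : forall f, mul f (one (tgt f)) = f;
  mulA : forall f g h, tgt f = src g -> tgt g = src h ->
           mul (mul f g) h = mul f (mul g h)
}.

Arguments src {c} _.
Arguments tgt {c} _.
Arguments mul {c} _ _.
Arguments one {c} _.

Section Defs.
Variable C : category.
Local Notation E := (El C) (only parsing).

Definition cancellative : Prop :=
  (forall f g g' : El C, tgt f = src g -> tgt f = src g' -> mul f g = mul f g' -> g = g') /\
  (forall f g g' : El C, tgt g = src f -> tgt g' = src f -> mul g f = mul g' f -> g = g').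

Definition invertible (e : E) : Prop :=
  exists e', tgt e = src e' /\ tgt e' = src e /\
    mul e e' = one (src e) /\ mul e' e = one (tgt e).

Definition sharp (S : E -> Prop) (x : E) : Prop :=
  (exists s e, S s /\ invertible e /\ tgt s = src e /\ x = mul s e) \/ invertible x.

Definition lprefix (f g : E) : Prop :=
  exists g', tgt f = src g' /\ g = mul f g'.

Definition left_multiple (h f : E) : Prop :=
  exists k, tgt k = src f /\ h = mul k f.

(* paths: a source object together with a list of consecutive composable elements *)
Fixpoint path_from (x : Ob C) (u : list E) : Prop :=
  match u with
  | [] => True
  | s :: u' => src s = x /\ path_from (tgt s) u'
  end.

Fixpoint eval (x : Ob C) (u : list E) : E :=
  match u with
  | [] => one x
  | s :: u' => mul s (eval (tgt s) u')
  end.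

Definition greedy2 (S : E -> Prop) (g1 g2 : E) : Prop :=
  forall s f, S s -> tgt f = src g1 ->
    lprefix s (mul (mul f g1) g2) -> lprefix s (mul f g1).

Fixpoint greedy (S : E -> Prop) (u : list E) : Prop :=
  match u with
  | g1 :: ((g2 :: _) as u') => greedy2 S g1 g2 /\ greedy S u'
  | _ => True
  end.

Definition normal (S : E -> Prop) (u : list E) : Prop :=
  greedy S u /\ Forall (sharp S) u.

Definition garside_family (S : E -> Prop) : Prop :=
  forall g, exists u, path_from (src g) u /\ normal S u /\ g = eval (src g) u.

Definition left_disjoint (f g : E) : Prop :=
  src f = src g /\
  forall h h', tgt h' = src f ->
    lprefix h (mul h' f) -> lprefix h (mul h' g) -> lprefix h h'.

(* ū | v symmetric S-normal, u and v S-normal paths with common source x *)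
Definition sym_normal (S : E -> Prop) (x : Ob C) (u v : list E) : Prop :=
  path_from x u /\ path_from x v /\ normal S u /\ normal S v /\
  forall a u' b v', u = a :: u' -> v = b :: v' -> left_disjoint a b.

Definition bowtie (f g f' g' : E) : Prop :=
  exists h h', tgt h = src f /\ tgt h' = src f' /\
    mul h f = mul h' f' /\ mul h g = mul h' g'.

Definition common_right_multiple (f g : E) : Prop :=
  exists f' g', tgt f = src f' /\ tgt g = src g' /\ mul f f' = mul g g'.

Definition common_left_multiple (h f g : E) : Prop :=
  left_multiple h f /\ left_multiple h g.

Definition weak_left_lcm (f g h : E) : Prop :=
  tgt f = tgt g /\ common_left_multiple h f g /\
  forall h1, common_left_multiple h1 f g ->
    (exists h2, common_left_multiple h2 h1 h) -> left_multiple h1 h.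

Definition cond_weak_left_lcms : Prop :=
  forall f g h0, common_left_multiple h0 f g ->
    exists h, weak_left_lcm f g h /\ left_multiple h0 h.

End Defs.

Arguments cancellative : clear implicits.

From Stdlib Require Import List.

(* If a f = b g with a, b left-disjoint,
   then every pair bowtie-equivalent to (a, b) is of the form (k a, k b), which
   makes a f a weak left-lcm of f and g; conversely, if a f' = b g' is a weak
   left-lcm of f' and g', then a and b are left-disjoint.  In a cancellative
   category with a Garside family S, left-disjointness of [u] and [v] for
   S-normal paths u, v reduces to left-disjointness of their first entries:
   it suffices to test divisors in S (every element is a product of
   S#-elements, and the test is multiplicative), and by greediness an element
   of S dividing h [u] already divides h times the first entry of u.
   Left-disjointness passes to left divisors, so the normal decompositions of
   left-disjoint elements form a symmetric normal path. *)

(* [obj] proves equalities of objects, using [src_mul]/[tgt_mul] on composable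
   products and the sources and targets of every equation between elements. *)
Ltac obj_facts :=
  match goal with
  | H : @eq (El _) _ _ |- _ =>
      pose proof (f_equal src H); pose proof (f_equal tgt H);
      revert H; obj_facts; intro H
  | _ => idtac
  end.

Ltac obj_goal :=
  repeat match goal with
  | |- context [src (one _)] => rewrite src_one
  | |- context [tgt (one _)] => rewrite tgt_one
  | |- context [src (mul ?f ?g)] => rewrite (src_mul _ f g) by (obj_goal; congruence)
  | |- context [tgt (mul ?f ?g)] => rewrite (tgt_mul _ f g) by (obj_goal; congruence)
  end.

Ltac obj_hyps :=
  repeat match goal with
  | H : context [src (one _)] |- _ => rewrite src_one in H
  | H : context [tgt (one _)] |- _ => rewrite tgt_one in H
  | H : context [src (mul ?f ?g)] |- _ => rewrite (src_mul _ f g) in H by (obj_goal; congruence)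
  | H : context [tgt (mul ?f ?g)] |- _ => rewrite (tgt_mul _ f g) in H by (obj_goal; congruence)
  end.

Ltac obj := obj_facts; obj_hyps; obj_goal; congruence.

Section Category.
Context {C : category}.

Lemma src_eval x u : path_from C x u -> src (eval C x u) = x.
Proof.
  revert x; induction u as [|a u IH]; intros x Hu; simpl.
  - apply src_one.
  - destruct Hu as [Ha Hu]. specialize (IH _ Hu). obj.
Qed.

Lemma lprefix_src c X : lprefix C c X -> src X = src c.
Proof. intros [y [Hy ->]]. obj. Qed.

Lemma lprefix_mull s t X :
  tgt s = src t -> lprefix C (mul s t) X -> lprefix C s X.
Proof.
  intros Hst [y [Hy ->]]. exists (mul t y). split; [obj|]. apply mulA; obj.
Qed.

Lemma lprefix_mulr c h s t :
  tgt h = src s -> tgt s = src t -> lprefix C c (mul h s) ->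
  lprefix C c (mul h (mul s t)).
Proof.
  intros Hh Hs [y [Hy Ey]]. exists (mul y t). split; [obj|].
  rewrite <- mulA, Ey by obj. apply mulA; obj.
Qed.

Lemma lprefix_invertible e h :
  invertible C e -> src h = src e -> lprefix C e h.
Proof.
  intros [e' (He & He' & Ee & _)] Hh. exists (mul e' h). split; [obj|].
  rewrite <- mulA, Ee, <- Hh by obj. symmetry. apply one_mul.
Qed.

Lemma lprefix_mul_invertible t e h :
  invertible C e -> tgt t = src e -> lprefix C t h -> lprefix C (mul t e) h.
Proof.
  intros [e' (He & He' & Ee & _)] Hte [z [Hz ->]]. exists (mul e' z).
  split; [obj|].
  rewrite mulA, <- (mulA _ e e' z), Ee by obj.
  replace (src e) with (src z) by obj. now rewrite one_mul.
Qed.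

Lemma greedy_lprefix_head S s x a u h :
  path_from C x (a :: u) -> greedy C S (a :: u) -> S s -> tgt h = x ->
  lprefix C s (mul h (eval C x (a :: u))) -> lprefix C s (mul h a).
Proof.
  revert x a h; induction u as [|b u IH]; intros x a h Hu Hg Hs Hh Hpre; simpl in *.
  - now rewrite mul_one in Hpre.
  - destruct Hu as (Ha & Hb & Hu). destruct Hg as [Hab Hg].
    pose proof (src_eval _ _ Hu).
    apply (Hab s h Hs); [obj|].
    apply (IH (tgt a) b (mul h a)); simpl; auto; [obj|].
    rewrite mulA by obj. exact Hpre.
Qed.

Lemma left_disjoint_lprefix s t a b :
  tgt s = src a -> tgt t = src b -> left_disjoint C (mul s a) (mul t b) ->
  left_disjoint C s t.
Proof.
  intros Hs Ht [Hsrc Hld]. split; [obj|]. intros c h Hh H1 H2.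
  apply (Hld c h); [obj | apply lprefix_mulr; auto | apply lprefix_mulr; auto; obj].
Qed.

End Category.

Section LeftDisjoint.
Context {C : category}.
Hypothesis HC : cancellative C.

Lemma lprefix_mul2l s t X :
  tgt s = src t -> tgt s = src X -> lprefix C (mul s t) (mul s X) -> lprefix C t X.
Proof.
  intros Ht HX [y [Hy Ey]]. exists y. split; [obj|].
  apply (proj1 HC s); [obj|obj|]. rewrite Ey. apply mulA; obj.
Qed.

Section LeftDisjointAt.
Variables f g : El C.
Hypothesis Hfg : src f = src g.

Definition left_disjoint_at (c : El C) : Prop :=
  forall h, tgt h = src f ->
    lprefix C c (mul h f) -> lprefix C c (mul h g) -> lprefix C c h.

Lemma left_disjoint_at_one x : left_disjoint_at (one x).
Proof.
  intros h Hh H1 _. apply lprefix_src in H1.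
  exists h. split; [obj|]. replace x with (src h) by obj. now rewrite one_mul.
Qed.

Lemma left_disjoint_at_sharp S s :
  (forall t, S t -> left_disjoint_at t) -> sharp C S s -> left_disjoint_at s.
Proof.
  intros HS [(t & e & St & He & Hte & ->) | He] h Hh H1 H2.
  - apply lprefix_mul_invertible; auto.
    apply HS; auto; eapply lprefix_mull; eauto.
  - apply lprefix_invertible; auto. apply lprefix_src in H1. obj.
Qed.

Lemma left_disjoint_at_mul s t :
  tgt s = src t -> left_disjoint_at s -> left_disjoint_at t ->
  left_disjoint_at (mul s t).
Proof.
  intros Hst Hs Ht h Hh H1 H2.
  destruct (Hs h Hh) as [h1 [Hh1 ->]]; [apply (lprefix_mull s t); auto .. |].
  assert (Ef : forall k, src k = src f -> mul (mul s h1) k = mul s (mul h1 k))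
    by (intros; apply mulA; obj).
  rewrite Ef in H1, H2 by obj.
  assert (Hh1f : tgt h1 = src f) by obj.
  destruct (Ht h1 Hh1f) as [m [Hm ->]].
  - apply (lprefix_mul2l s); [obj | obj | exact H1].
  - apply (lprefix_mul2l s); [obj | obj | exact H2].
  - exists m. split; [obj|]. symmetry. apply mulA; obj.
Qed.

Lemma left_disjoint_at_eval S x w :
  (forall s, S s -> left_disjoint_at s) ->
  path_from C x w -> Forall (sharp C S) w -> left_disjoint_at (eval C x w).
Proof.
  intros HS; revert x; induction w as [|s w IH]; intros x Hw Hsharp; simpl.
  - apply left_disjoint_at_one.
  - destruct Hw as [Hs Hw]. inversion_clear Hsharp as [|? ? Ss Hsharp'].
    apply left_disjoint_at_mul.
    + symmetry. exact (src_eval _ _ Hw).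
    + exact (left_disjoint_at_sharp S s HS Ss).
    + exact (IH _ Hw Hsharp').
Qed.

Lemma left_disjoint_of_garside S :
  garside_family C S -> (forall s, S s -> left_disjoint_at s) -> left_disjoint C f g.
Proof.
  intros HG HS. split; [exact Hfg|]. intros c.
  destruct (HG c) as (w & Hw & [_ Hsharp] & ->).
  exact (left_disjoint_at_eval S _ _ HS Hw Hsharp).
Qed.

End LeftDisjointAt.

Lemma sym_normal_left_disjoint S x u v :
  garside_family C S -> sym_normal C S x u v ->
  left_disjoint C (eval C x u) (eval C x v).
Proof.
  intros HG (Hu & Hv & [Gu _] & [Gv _] & Hld).
  assert (Hsrc : src (eval C x u) = src (eval C x v))
    by now rewrite (src_eval _ _ Hu), (src_eval _ _ Hv).
  apply (left_disjoint_of_garside _ _ Hsrc S HG).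
  intros s Ss h Hh H1 H2. rewrite src_eval in Hh by exact Hu.
  destruct u as [|a u]; [simpl in H1; now rewrite <- Hh, mul_one in H1|].
  destruct v as [|b v]; [simpl in H2; now rewrite <- Hh, mul_one in H2|].
  destruct (Hld a u b v eq_refl eq_refl) as [_ Hab].
  apply (Hab s h); [destruct Hu; congruence | ..];
    eapply greedy_lprefix_head; eauto.
Qed.

End LeftDisjoint.

Section WeakLcm.
Context {C : category}.
Hypothesis HC : cancellative C.

Lemma left_disjoint_bowtie a b p q :
  src p = src q -> left_disjoint C a b -> bowtie C p q a b ->
  exists k, tgt k = src a /\ p = mul k a /\ q = mul k b.
Proof.
  intros Hpq [Hab Hld] (h & h' & Hh & Hh' & Ep & Eq).
  destruct (Hld h h' Hh') as [k [Hk Ek]].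
  - exists p. split; [exact Hh | symmetry; exact Ep].
  - exists q. split; [obj | symmetry; exact Eq].
  - subst h'. exists k. split; [obj|].
    split; apply (proj1 HC h); try obj; rewrite <- mulA by obj; assumption.
Qed.

Lemma left_disjoint_weak_left_lcm a b f g :
  left_disjoint C a b -> tgt a = src f -> tgt b = src g -> mul a f = mul b g ->
  weak_left_lcm C f g (mul a f).
Proof.
  intros Hld Ha Hb Eab. split; [obj|]. split.
  { split; [exists a | exists b]; split; auto. }
  intros h1 [[a1 [Ha1 E1]] [b1 [Hb1 E2]]] (h2 & [c [Hc Ec]] & [d [Hd Ed]]).
  assert (Hbow : bowtie C a1 b1 a b).
  { exists c, d. split; [obj|]. split; [obj|]. split.
    - apply (proj2 HC f); try obj. rewrite !mulA by obj. congruence.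
    - apply (proj2 HC g); try obj. rewrite !mulA by obj. congruence. }
  destruct (left_disjoint_bowtie a b a1 b1 ltac:(obj) Hld Hbow) as (k & Hk & -> & _).
  exists k. split; [obj|]. rewrite E1. apply mulA; obj.
Qed.

Lemma weak_left_lcm_left_disjoint a b f g :
  tgt a = src f -> tgt b = src g ->
  weak_left_lcm C f g (mul a f) -> mul a f = mul b g -> left_disjoint C a b.
Proof.
  intros Ha Hb (_ & _ & Hw) Eab. split; [obj|].
  intros c h Hh [a1 [Ha1 Ea1]] [b1 [Hb1 Eb1]].
  assert (E1 : mul a1 f = mul b1 g).
  { apply (proj1 HC c); try obj. rewrite <- !mulA by obj.
    rewrite <- Ea1, <- Eb1, !mulA by obj. now rewrite Eab. }
  destruct (Hw (mul a1 f)) as [d [Hd Ed]].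
  - split; [exists a1 | exists b1]; split; auto; obj.
  - exists (mul h (mul a f)). split.
    + exists c. split; [obj|]. rewrite <- mulA, Ea1 by obj. apply mulA; obj.
    + exists h. split; auto; obj.
  - assert (Ea1d : a1 = mul d a).
    { apply (proj2 HC f); try obj. rewrite Ed. symmetry. apply mulA; obj. }
    exists d. split; [obj|].
    apply (proj2 HC a); try obj. rewrite Ea1, Ea1d. symmetry. apply mulA; obj.
Qed.

End WeakLcm.

Lemma left_disjoint_sym_normal {C : category} S a b :
  garside_family C S -> left_disjoint C a b ->
  exists u v, sym_normal C S (src a) u v /\
    a = eval C (src a) u /\ b = eval C (src a) v.
Proof.
  intros HG Hld.
  destruct (HG a) as (u & Hu & Nu & Eu). destruct (HG b) as (v & Hv & Nv & Ev).
  assert (Hab : src a = src b) by apply Hld.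
  rewrite <- Hab in Hv, Ev.
  exists u, v. split; [|split; assumption].
  split; [exact Hu|]. split; [exact Hv|]. split; [exact Nu|]. split; [exact Nv|].
  intros s u' t v' -> ->. destruct Hu as [Hs Hu']. destruct Hv as [Ht Hv'].
  simpl in Eu, Ev. subst a b.
  apply (left_disjoint_lprefix s t (eval C (tgt s) u') (eval C (tgt t) v'));
    [symmetry; exact (src_eval _ _ Hu') | symmetry; exact (src_eval _ _ Hv') | exact Hld].
Qed.

Section Equivalence.
Context {C : category}.
Hypothesis HC : cancellative C.
Variable S : El C -> Prop.
Hypothesis HS : garside_family C S.

Lemma cond_weak_left_lcms_of_sym_normal :
  (forall f g : El C, common_right_multiple C f g ->
     exists (x : Ob C) (u v : list (El C)),
       sym_normal C S x u v /\ bowtie C f g (eval C x u) (eval C x v)) ->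
  cond_weak_left_lcms C.
Proof.
  intros Hsym f g h0 [[p [Hp Ep]] [q [Hq Eq]]].
  destruct (Hsym p q) as (x & u & v & Huv & Hbow).
  { exists f, g. split; [exact Hp|]. split; [exact Hq|]. congruence. }
  pose proof (sym_normal_left_disjoint HC S x u v HS Huv) as Hld.
  set (a := eval C x u) in *. set (b := eval C x v) in *.
  assert (Hab : src a = src b) by apply Hld.
  destruct (left_disjoint_bowtie HC a b p q ltac:(obj) Hld Hbow) as (k & Hk & -> & ->).
  assert (Eab : mul a f = mul b g).
  { apply (proj1 HC k); try obj. rewrite <- !mulA by obj. congruence. }
  exists (mul a f). split.
  - apply (left_disjoint_weak_left_lcm HC a b); auto; obj.
  - exists k. split; [obj|]. rewrite Ep. apply mulA; obj.
Qed.

Lemma sym_normal_of_cond_weak_left_lcms f g :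
  cond_weak_left_lcms C -> common_right_multiple C f g ->
  exists (x : Ob C) (u v : list (El C)),
    sym_normal C S x u v /\ bowtie C f g (eval C x u) (eval C x v).
Proof.
  intros Hlcm (f' & g' & Hf & Hg & E).
  destruct (Hlcm f' g' (mul f f')) as (h & Hw & k & Hk & Ek).
  { split; [exists f | exists g]; split; auto. }
  pose proof Hw as (_ & [[a [Ha Eh]] [b [Hb Eab]]] & _). subst h.
  assert (Ef : f = mul k a).
  { apply (proj2 HC f'); try obj. rewrite Ek. symmetry. apply mulA; obj. }
  assert (Eg : g = mul k b).
  { apply (proj2 HC g'); try obj. rewrite <- E, Ek, Eab. symmetry. apply mulA; obj. }
  pose proof (weak_left_lcm_left_disjoint HC a b f' g' Ha Hb Hw Eab) as Hld.
  destruct (left_disjoint_sym_normal S a b HS Hld) as (u & v & Huv & Eu & Ev).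
  exists (src a), u, v. split; [exact Huv|].
  exists (one (src f)), k. split; [apply tgt_one|]. split; [obj|].
  rewrite <- Eu, <- Ev, one_mul. split; [exact Ef|].
  replace (src f) with (src g) by obj. now rewrite one_mul.
Qed.

End Equivalence.

Theorem mainTheorem4 (C : category) (HC : cancellative C)
  (S : El C -> Prop) (HS : garside_family C S) :
  (forall f g : El C, common_right_multiple C f g ->
     exists (x : Ob C) (u v : list (El C)),
       sym_normal C S x u v /\ bowtie C f g (eval C x u) (eval C x v))
  <-> cond_weak_left_lcms C.
Proof.
  split.
  - exact (cond_weak_left_lcms_of_sym_normal HC S HS).
  - intros Hlcm f g. exact (sym_normal_of_cond_weak_left_lcms HC S HS f g Hlcm).
Qed.
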